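(* Let $M,N:\mathbf{R}^d\to\mathbf{Vec}$ be interval decomposable persistence modules with barcodes $\mathcal{B}(M)$ and $\mathcal{B}(N)$. Then \[d_{\mathrm{I},2d}(\mathrm{rk}(M),\mathrm{rk}(N))\le d_{\mathrm{B}}(\mathcal{B}(M),\mathcal{B}(N)).\]
   Context: $\mathbf{R}^d$ has the product order; a persistence module $M:\mathbf{R}^d\to\mathbf{Vec}$ (vector spaces over a fixed field) consists of spaces $M_\mathbf{a}$ and linear maps $\varphi_M(\mathbf{a},\mathbf{b}):M_\mathbf{a}\to M_\mathbf{b}$ for $\mathbf{a}\le\mathbf{b}$, functorially. For $\varepsilon\ge0$ let $\vec\varepsilon=\varepsilon(1,\dots,1)$. Modules $M,N$ are $\varepsilon$-interleaved if there are natural families $f_\mathbf{a}:M_\mathbf{a}\to N_{\mathbf{a}+\vec\varepsilon}$, $g_\mathbf{a}:N_\mathbf{a}\to M_{\mathbf{a}+\vec\varepsilon}$ with $g_{\mathbf{a}+\vec\varepsilon}f_\mathbf{a}=\varphi_M(\mathbf{a},\mathbf{a}+2\vec\varepsilon)$ and $f_{\mathbf{a}+\vec\varepsilon}g_\mathbf{a}=\varphi_N(\mathbf{a},\mathbf{a}+2\vec\varepsilon)$. An interval of $\mathbf{R}^d$ is a nonempty subset $J$ that is convex ($\mathbf{a}\le\mathbf{b}\le\mathbf{c}$, $\mathbf{a},\mathbf{c}\in J\Rightarrow\mathbf{b}\in J$) and connected (any two points linked by a finite zigzag of comparable points in $J$); its interval module has the field at points of $J$, zero elsewhere, and identity maps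 within $J$. $M$ is interval decomposable if it is a direct sum of interval modules; its barcode $\mathcal{B}(M)$ is the multiset of these intervals. An $\varepsilon$-matching between barcodes is a partial bijection $\sigma$ such that for each matched pair $(J,\sigma(J))$ the interval modules of $J$ and $\sigma(J)$ are $\varepsilon$-interleaved, and each unmatched interval's module is $\varepsilon$-interleaved with the zero module; $d_{\mathrm{B}}$ is the infimum of $\varepsilon$ admitting an $\varepsilon$-matching. The rank invariant $\mathrm{rk}(M):\mathbf{R}^d\times\mathbf{R}^d\to\mathbf{Z}_+\cup\{\infty\}$ is $\mathrm{rk}(M)(\mathbf{a},\mathbf{b})=\mathrm{rank}\,\varphi_M(\mathbf{a},\mathbf{b})$ if $\mathbf{a}\le\mathbf{b}$ and $\infty$ otherwise. For $F,G:\mathbf{R}^d\times\mathbf{R}^d\to\mathbf{Z}_+\cup\{\infty\}$, $d_{\mathrm{I},2d}(F,G):=\inf\{\varepsilon\ge0:\forall(\mathbf{a},\mathbf{b}),\ F(\mathbf{a},\mathbf{b})\ge G(\mathbf{a}-\vec\varepsilon,\mathbf{b}+\vec\varepsilon)\text{ and }G(\mathbf{a},\mathbf{b})\ge F(\mathbf{a}-\vec\varepsilon,\mathbf{b}+\vec\varepsilon)\}$. *)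

From HB Require Import structures.
From mathcomp Require Import all_boot all_order all_algebra.
From mathcomp Require Import boolp classical_sets reals ereal Rstruct.
From Stdlib Require Import Rdefinitions.

Set Implicit Arguments. Unset Strict Implicit. Unset Printing Implicit Defensive.
Import Order.TTheory GRing.Theory Num.Theory.
Local Open Scope ring_scope.
Local Open Scope classical_set_scope.

Definition pt (d : nat) := 'I_d -> R.
Definition le_pt d (a b : pt d) : Prop := forall i, a i <= b i.
Definition shift d (e : R) (a : pt d) : pt d := fun i => a i + e.

Section Modules.
Variables (K : fieldType) (d : nat).

(** A (pre)persistence module: spaces and linear structure maps phi(a,b);
    only the maps for a <= b are meaningful. *)
Record pmod := PMod {
  sp : pt d -> lmodType K;
  mp : forall a b : pt d, {linear sp a -> sp b}
}.

Definition is_pmod (M : pmod) : Prop :=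
  (forall a v, le_pt a a -> mp M a a v = v) /\
  (forall a b c v, le_pt a b -> le_pt b c ->
     mp M a c v = mp M b c (mp M a b v)).

Definition interleaved (M N : pmod) (e : R) : Prop :=
  exists (f : forall a, {linear sp M a -> sp N (shift e a)})
         (g : forall a, {linear sp N a -> sp M (shift e a)}),
    (forall a b v, le_pt a b ->
        f b (mp M a b v) = mp N (shift e a) (shift e b) (f a v)) /\
    (forall a b v, le_pt a b ->
        g b (mp N a b v) = mp M (shift e a) (shift e b) (g a v)) /\
    (forall a v, g (shift e a) (f a v) = mp M a (shift e (shift e a)) v) /\
    (forall a v, f (shift e a) (g a v) = mp N a (shift e (shift e a)) v).

Definition zigzag_connected (J : set (pt d)) : Prop :=
  forall a b, J a -> J b ->
    exists (n : nat) (x : nat -> pt d),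
      x 0%N = a /\ x n = b /\ (forall i : nat, leq i n -> J (x i)) /\
      (forall i : nat, leq i.+1 n -> le_pt (x i) (x i.+1) \/ le_pt (x i.+1) (x i)).

Definition is_interval (J : set (pt d)) : Prop :=
  (exists a, J a) /\
  (forall a b c, J a -> J c -> le_pt a b -> le_pt b c -> J b) /\
  zigzag_connected J.

(** The interval module of J: the field K (= 'rV_1) at points of J, the zero
    space (= 'rV_0) elsewhere, identity maps inside J (and zero maps otherwise). *)
Definition imod (J : set (pt d)) : pmod :=
  @PMod (fun a => 'rV[K]_(asbool (J a)))
        (fun a b => mulmxr (pid_mx 1)).

Definition zero_mod : pmod := imod set0.

(** Interval decomposability: M is the (internal) direct sum of interval
    submodules indexed by L, the l-th one having support J l and spanned at
    a point a of J l by e l a.  The family (L, J) is then the barcode. *)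
Definition is_interval_decomposition (M : pmod) (L : Type) (J : L -> set (pt d)) : Prop :=
  (forall l, is_interval (J l)) /\
  exists e : forall (l : L) (a : pt d), sp M a,
    (forall l a b, le_pt a b -> J l a -> J l b -> mp M a b (e l a) = e l b) /\
    (forall l a b, le_pt a b -> J l a -> ~ J l b -> mp M a b (e l a) = 0) /\
    (forall a (n : nat) (l : 'I_n -> L), injective l -> (forall i, J (l i) a) ->
       forall c : 'I_n -> K, \sum_(i < n) c i *: e (l i) a = 0 -> forall i, c i = 0) /\
    (forall a (v : sp M a), exists (n : nat) (l : 'I_n -> L) (c : 'I_n -> K),
       (forall i, J (l i) a) /\ v = \sum_(i < n) c i *: e (l i) a).

(** epsilon-matchings between barcodes (multisets given as indexed families). *)
Definition is_matching (L L' : Type) (s : L -> L' -> Prop) : Prop :=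
  (forall x y y', s x y -> s x y' -> y = y') /\
  (forall x x' y, s x y -> s x' y -> x = x').

Definition eps_matching (L L' : Type) (J : L -> set (pt d)) (J' : L' -> set (pt d))
    (e : R) (s : L -> L' -> Prop) : Prop :=
  is_matching s /\
  (forall x y, s x y -> interleaved (imod (J x)) (imod (J' y)) e) /\
  (forall x, (forall y, ~ s x y) -> interleaved (imod (J x)) zero_mod e) /\
  (forall y, (forall x, ~ s x y) -> interleaved (imod (J' y)) zero_mod e).

(** Bottleneck distance (inf over the empty set is +oo). *)
Definition d_B (L L' : Type) (J : L -> set (pt d)) (J' : L' -> set (pt d)) : \bar R :=
  ereal_inf [set (e%:E)%E | e in
    [set e : R | 0 <= e /\ exists s : L -> L' -> Prop, eps_matching J J' e s]].

(** Rank of a linear map between arbitrary vector spaces, in Z_+ u {oo}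
    (None = oo). rank_ge f n : the image contains n linearly independent vectors. *)
Definition lin_indep (V : lmodType K) (n : nat) (w : 'I_n -> V) : Prop :=
  forall c : 'I_n -> K, \sum_(i < n) c i *: w i = 0 -> forall i, c i = 0.

Definition rank_ge (U V : lmodType K) (f : U -> V) (n : nat) : Prop :=
  exists v : 'I_n -> U, lin_indep (fun i => f (v i)).

Definition rank (U V : lmodType K) (f : U -> V) : option nat :=
  if pselect (forall n, rank_ge f n) then None
  else Some (xget 0%N [set n | rank_ge f n /\ ~ rank_ge f n.+1]).

Definition rk (M : pmod) (a b : pt d) : option nat :=
  if pselect (le_pt a b) then rank (mp M a b) else None.

End Modules.

Definition le_natinf (x y : option nat) : bool :=
  match x, y with
  | _, None => true
  | None, Some _ => false
  | Some m, Some n => leq m n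
  end.

Definition d_I2d (d : nat) (F G : pt d -> pt d -> option nat) : \bar R :=
  ereal_inf [set (e%:E)%E | e in
    [set e : R | 0 <= e /\ forall a b : pt d,
       le_natinf (G (shift (- e) a) (shift e b)) (F a b) /\
       le_natinf (F (shift (- e) a) (shift e b)) (G a b)]].

From mathcomp Require Import all_boot all_order all_algebra.
From mathcomp Require Import boolp classical_sets reals ereal Rstruct.
From mathcomp Require Import lra.
Set Implicit Arguments. Unset Strict Implicit. Unset Printing Implicit Defensive.
Import Order.TTheory GRing.Theory Num.Theory.
Local Open Scope ring_scope.

(* By the interval decomposition, rank phi_M(a, b) is the number of bars of M
   containing both a and b.  Fix an e-matching.  A bar of N containing a - e and
   b + e contains, by convexity, a +- e and b +- e.  Such a bar cannot be
   unmatched, since an interval module e-interleaved with zero cannot contain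
   both p - e and p + e; and its partner bar in M contains a and b, because an
   e-interleaving of interval modules maps p - e and p + e in one support to p
   in the other.  Injectivity of the matching then gives
   rank phi_N(a - e, b + e) <= rank phi_M(a, b), and symmetrically. *)

Section LinearIndependence.
Variables (K : fieldType) (V : lmodType K).

Lemma lin_indep_leq_span n k (u : 'I_n -> V) (w : 'I_k -> V) (C : 'I_n -> 'I_k -> K) :
  lin_indep u -> (forall i, u i = \sum_(j < k) C i j *: w j) -> (n <= k)%N.
Proof.
move=> indep_u uC; pose A := \matrix_(i < n, j < k) C i j.
suff <- : \rank A = n by exact: rank_leq_col.
(* Otherwise a nonzero x with x *m A = 0 yields a vanishing combination of the u i. *)
apply/eqP; rewrite eqn_leq rank_leq_row /= leqNgt; apply/negP => rank_lt.
have /rowV0Pn[x /sub_kermxP xA0] : kermx A != 0.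
  by rewrite -mxrank_eq0 mxrank_ker subn_eq0 -ltnNge.
apply/negP; rewrite negbK; apply/eqP/rowP => i; rewrite mxE.
apply: indep_u i; transitivity (\sum_(j < k) (x *m A) 0 j *: w j); last first.
  by rewrite xA0 big1 // => j _; rewrite mxE scale0r.
under eq_bigr => i _ do rewrite uC scaler_sumr.
rewrite exchange_big /=; apply: eq_bigr => j _.
by rewrite mxE scaler_suml; apply: eq_bigr => i _; rewrite scalerA mxE.
Qed.

Lemma lin_indep_span_uniq (L : eqType) (S : L -> Prop) (E : L -> V) n (u : 'I_n -> V) :
  lin_indep u ->
  (forall i, exists r : seq (L * K),
     (forall p, p \in r -> S p.1) /\ u i = \sum_(p <- r) p.2 *: E p.1) ->
  exists s : seq L, [/\ uniq s, forall x, x \in s -> S x & (n <= size s)%N].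
Proof.
move=> indep_u /choice[r /all_and2[rS ur]].
pose s := undup (flatten [seq map fst (r i) | i <- enum 'I_n]).
exists s; split; first exact: undup_uniq.
  by move=> x; rewrite mem_undup => /flatten_mapP[i _ /mapP[p /rS ? ->]].
pose t := tnth (in_tuple s).
apply: (lin_indep_leq_span (u := u) (w := E \o t)
  (C := fun i j => \sum_(p <- r i | p.1 == t j) p.2)) => // i.
rewrite ur; under [RHS]eq_bigr do rewrite scaler_suml big_mkcond.
rewrite exchange_big /=; apply: eq_big_seq => p pr; rewrite -big_mkcond /=.
have p_s : p.1 \in s.
  by rewrite mem_undup; apply/flatten_mapP; exists i; rewrite ?mem_enum ?map_f.
rewrite -(big_tnth _ _ s (fun x => p.1 == x) (fun x => p.2 *: E x)).
by rewrite -big_filter (eq_filter (eq_sym p.1)) filter_pred1_uniq ?undup_uniq // big_seq1.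
Qed.

End LinearIndependence.

Section Rank.
Variables (K : fieldType) (U V : lmodType K) (f : U -> V).

Lemma rank_ge0 : rank_ge f 0.
Proof. by exists (fun _ => 0) => c _ []. Qed.

Lemma rank_geW m n : (m <= n)%N -> rank_ge f n -> rank_ge f m.
Proof.
move=> le_mn [v indep_fv]; exists (fun i => v (widen_ord le_mn i)) => c csum0 i.
pose c' (j : 'I_n) := oapp c 0 (insub (val j) : option 'I_m).
have c'E (k : 'I_m) : c' (widen_ord le_mn k) = c k by rewrite /c' /= valK.
rewrite -c'E; apply: indep_fv; rewrite -[RHS]csum0 (bigID (fun j : 'I_n => (j < m)%N)) /=.
rewrite [X in _ + X]big1 => [|j]; last by move=> /negbTE jm; rewrite /c' insubF ?scale0r.
by rewrite addr0 big_ord_narrow; apply: eq_bigr => k _; rewrite c'E.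
Qed.

Variant rank_spec : option nat -> Prop :=
  | RankInfinite of (forall n, rank_ge f n) : rank_spec None
  | RankFinite r of (forall n, rank_ge f n <-> (n <= r)%N) : rank_spec (Some r).

Lemma rankP : rank_spec (rank f).
Proof.
rewrite /rank; case: pselect => [rank_inf|not_inf]; first exact: RankInfinite.
have /existsNP[n not_ge_n] := not_inf.
have ex_r : exists r, rank_ge f r /\ ~ rank_ge f r.+1.
  elim: n not_ge_n => [|n IHn] not_ge_n; first by have := rank_ge0.
  by have [ge_n|/IHn//] := pselect (rank_ge f n); exists n.
have [ge_r not_ge_r1] := xgetPex 0%N ex_r.
apply: RankFinite => k; split => [ge_k|le_kr]; last exact: rank_geW ge_r.
by rewrite leqNgt; apply/negP => lt_rk; apply/not_ge_r1/(rank_geW lt_rk).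
Qed.

End Rank.

Lemma le_natinf_rank (K : fieldType) (U V U' V' : lmodType K)
    (f : U -> V) (g : U' -> V') :
  (forall n, rank_ge f n -> rank_ge g n) -> le_natinf (rank f) (rank g).
Proof.
move=> fg; case: (rankP g) => [|rg rgE]; first by case: (rank f).
case: (rankP f) => [f_inf|rf rfE].
  by have := (rgE rg.+1).1 (fg _ (f_inf rg.+1)); rewrite ltnn.
by apply/(rgE rf).1/fg/(rfE rf).2.
Qed.

Lemma rk_le (K : fieldType) d (M : pmod K d) (a b : pt d) :
  le_pt a b -> rk M a b = rank (mp M a b).
Proof. by rewrite /rk; case: pselect. Qed.

Lemma rk_nle (K : fieldType) d (M : pmod K d) (a b : pt d) :
  ~ le_pt a b -> rk M a b = None.
Proof. by rewrite /rk; case: pselect. Qed.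

Section Points.
Variable d : nat.

Lemma shiftNK e (a : pt d) : shift e (shift (- e) a) = a.
Proof. by apply: funext => i; rewrite /shift addrNK. Qed.

Lemma le_pt_shift e (a b : pt d) : le_pt a b -> le_pt (shift e a) (shift e b).
Proof. by move=> le_ab i; rewrite /shift lerD2r. Qed.

Lemma le_pt_shiftN e (a : pt d) : 0 <= e -> le_pt (shift (- e) a) (shift e a).
Proof. by move=> e_ge0 i; rewrite /shift lerD2l; lra. Qed.

Lemma le_pt_trans (a b c : pt d) : le_pt a b -> le_pt b c -> le_pt a c.
Proof. by move=> le_ab le_bc i; apply: le_trans (le_ab i) (le_bc i). Qed.

End Points.

Section IntervalDecomposition.
Variables (K : fieldType) (d : nat) (M : pmod K d) (L : Type) (J : L -> set (pt d)).
Hypothesis decM : is_interval_decomposition M J.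

Lemma rank_ge_bars a b n : le_pt a b -> rank_ge (mp M a b) n ->
  exists l : 'I_n -> L, injective l /\ forall i, J (l i) a /\ J (l i) b.
Proof.
case: decM => _ [e [e_mp [e_mp0 [_ e_span]]]] le_ab [v indep_fv].
(* {classic L} equips the index type L with the decidable equality needed to count bars. *)
have fv_span i : exists r : seq ({classic L} * K),
    (forall p, p \in r -> J p.1 a /\ J p.1 b) /\
    mp M a b (v i) = \sum_(p <- r) p.2 *: e p.1 b.
  have [m [l [c [lJ ->]]]] := e_span a (v i).
  exists [seq (l j, c j) | j <- enum 'I_m & `[< J (l j) b >]]; split.
    move=> p /mapP[j]; rewrite mem_filter => /andP[/asboolP lJb _] ->.
    by split; [apply: lJ|].
  rewrite linear_sum big_map big_filter big_enum_cond [RHS]big_mkcond /=.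
  apply: eq_bigr => j _; rewrite linearZ /=.
  case: asboolP => [lJb|lJNb]; first by rewrite (e_mp _ _ _ le_ab (lJ j) lJb).
  by rewrite (e_mp0 _ _ _ le_ab (lJ j) lJNb) scaler0.
have [s [uniq_s sJ size_s]] := lin_indep_span_uniq
  (S := fun l : {classic L} => J l a /\ J l b) (E := fun l => e l b) indep_fv fv_span.
exists (fun i => tnth (in_tuple s) (widen_ord size_s i)); split.
  by move=> i j /(tuple_uniqP (in_tuple s) uniq_s)/(congr1 val) /= /val_inj.
by move=> i; apply/sJ/mem_tnth.
Qed.

Lemma bars_rank_ge a b n (l : 'I_n -> L) : le_pt a b -> injective l ->
  (forall i, J (l i) a /\ J (l i) b) -> rank_ge (mp M a b) n.
Proof.
case: decM => _ [e [e_mp [_ [e_indep _]]]] le_ab inj_l lJ.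
exists (fun i => e (l i) a) => c csum0.
apply: (e_indep b n l inj_l (fun i => (lJ i).2)); rewrite -[RHS]csum0.
by apply: eq_bigr => i _; rewrite e_mp //; case: (lJ i).
Qed.

End IntervalDecomposition.

Section IntervalModules.
Variables (K : fieldType) (d : nat).

Lemma interleaved_sym (M N : pmod K d) e : interleaved M N e -> interleaved N M e.
Proof. by case=> f [g [fN [gN [gf fg]]]]; exists g, f. Qed.

Lemma imod_sp0 (J : set (pt d)) a (v : sp (imod K J) a) : ~ J a -> v = 0.
Proof. by move: v => /= + notJa; rewrite asboolF // => v; apply: thinmx0. Qed.

Lemma imod_mp_neq0 (J : set (pt d)) a b :
  J a -> J b -> mp (imod K J) a b (const_mx 1) != 0.
Proof.
move=> Ja Jb; rewrite /= (asboolT Ja) (asboolT Jb) pid_mx_1 mulmx1.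
by apply/eqP => /rowP /(_ 0); rewrite !mxE; apply/eqP/oner_neq0.
Qed.

Lemma interleaved_imod_mem (J1 J2 : set (pt d)) e a :
  interleaved (imod K J1) (imod K J2) e ->
  J2 (shift (- e) a) -> J2 (shift e a) -> J1 a.
Proof.
case=> f [g [_ [_ [_ fg]]]] J2a' J2a''; apply: contrapT => notJ1a.
have := fg (shift (- e) a) (const_mx 1).
rewrite (imod_sp0 (g _ _)) ?shiftNK // linear0 => /esym/eqP; apply/negP.
by apply: imod_mp_neq0; rewrite ?shiftNK.
Qed.

End IntervalModules.

Section Matching.
Variables (K : fieldType) (d : nat).

Lemma eps_matching_sym (L L' : Type) (J : L -> set (pt d)) (J' : L' -> set (pt d)) e s :
  eps_matching K J J' e s -> eps_matching K J' J e (fun y x => s x y).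
Proof.
case=> [[s_fun s_inj] [s_inter [unmatched unmatched']]].
split; first by split=> x y y'; [apply: s_inj | apply: s_fun].
by split=> // y x /s_inter/interleaved_sym.
Qed.

Lemma rk_le_of_eps_matching (M N : pmod K d) (L : Type) (J : L -> set (pt d))
    (L' : Type) (J' : L' -> set (pt d)) e s :
  is_interval_decomposition M J -> is_interval_decomposition N J' ->
  0 <= e -> eps_matching K J J' e s ->
  forall a b, le_natinf (rk N (shift (- e) a) (shift e b)) (rk M a b).
Proof.
move=> decM decN e_ge0 [[s_fun _] [s_inter [_ unmatched']]] a b.
have [le_ab|/(rk_nle M)->] := pselect (le_pt a b); last by case: rk.
have le_ab' := le_pt_trans (le_pt_shiftN a e_ge0) (le_pt_shift e le_ab).
rewrite !rk_le //; apply: le_natinf_rank => n.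
move=> /(rank_ge_bars decN le_ab') [l' [inj_l' l'J]].
have box i x : le_pt (shift (- e) a) x -> le_pt x (shift e b) -> J' (l' i) x.
  by have [_ [convex _]] := decN.1 (l' i); apply: convex (l'J i).1 (l'J i).2.
have J'a i : J' (l' i) (shift e a).
  exact: box (le_pt_shiftN a e_ge0) (le_pt_shift e le_ab).
have J'b i : J' (l' i) (shift (- e) b).
  exact: box (le_pt_shift _ le_ab) (le_pt_shiftN b e_ge0).
have /choice[x sx] i : exists x, s x (l' i).
  apply: contrapT => /forallNP /unmatched' /interleaved_sym/interleaved_imod_mem.
  by apply; [case: (l'J i) | apply: J'a].
apply: (bars_rank_ge decM le_ab (l := x)) => [i j xij|i].
  by apply/inj_l'/(s_fun (x i)); rewrite // xij.
have [J'a' J'b'] := l'J i.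
by split; apply: (interleaved_imod_mem (s_inter _ _ (sx i))).
Qed.

End Matching.

Theorem corollary6p4 (K : fieldType) (d : nat) (M N : pmod K d)
  (HM : is_pmod M) (HN : is_pmod N)
  (L : Type) (J : L -> set (pt d)) (decM : is_interval_decomposition M J)
  (L' : Type) (J' : L' -> set (pt d)) (decN : is_interval_decomposition N J') :
  (d_I2d (rk M) (rk N) <= d_B K J J')%E.
Proof.
apply: ereal_inf_le_tmp => _ [e [e_ge0 [s s_match]] <-]; exists e => //.
split=> // a b; split.
  exact: (rk_le_of_eps_matching decM decN e_ge0 s_match a b).
exact: (rk_le_of_eps_matching decN decM e_ge0 (eps_matching_sym s_match) a b).
Qed.
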